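(* Let $\beta,\gamma,\mu>0$, $0<p<\tfrac12$, $\delta=\beta/(\gamma+\mu)>4(1-p)$, and suppose $\frac{\gamma}{\mu}>F(\delta)$. Then the Jacobian at $E_1$ of the $(S_0,S_1,A)$ subsystem of the temporary adoption model has exactly one negative real eigenvalue, and its other two eigenvalues have positive real part (they are either both real and positive or a complex conjugate pair with positive real part). In particular $E_1$ has a two-dimensional unstable manifold.
   Context: The temporary adoption model is $S_0'=\mu-\beta S_0A-\mu S_0$, $S_1'=(1-p)\beta S_0A-\beta S_1A-\mu S_1$, $A'=\beta(pS_0+S_1)A-(\gamma+\mu)A$, $R'=\gamma A-\mu R$, with $S_0+S_1+A+R=1$. $E_1$ is the equilibrium with $A=A_1=\tfrac12(1+\tfrac{\gamma}{\mu})^{-1}\big[1-2\delta^{-1}+\sqrt{1-4(1-p)\delta^{-1}}\big]$, $S_0=1/(\delta(\frac{\gamma}{\mu}+1)A+1)$, $S_1=(1-p)\delta(\frac{\gamma}{\mu}+1)A/(\delta(\frac{\gamma}{\mu}+1)A+1)^2$, $R=\frac{\gamma}{\mu}A$. The function $F$ is $F(\delta)=\frac{\delta^2}{2(1-2p)}\cdot\frac{[1+\sqrt{1-4(1-p)\delta^{-1}}]^3}{(\delta-2)+\delta\sqrt{1-4(1-p)\delta^{-1}}}-1$. *)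

From Stdlib Require Import Reals Lra.
Open Scope R_scope.

Record Cx := mkCx { re : R; im : R }.
Definition Cof (x : R) : Cx := mkCx x 0.
Definition cadd (u v : Cx) : Cx := mkCx (re u + re v) (im u + im v).
Definition cneg (u : Cx) : Cx := mkCx (- re u) (- im u).
Definition csub (u v : Cx) : Cx := cadd u (cneg v).
Definition cmul (u v : Cx) : Cx :=
  mkCx (re u * re v - im u * im v) (re u * im v + im u * re v).
Definition czero : Cx := Cof 0.

(* 3x3 matrices, indices 0,1,2 (order: S0, S1, A). *)
Definition Mat3 := nat -> nat -> R.

Definition cdet3 (M : nat -> nat -> Cx) : Cx :=
  csub
   (cadd (cadd (cmul (M 0%nat 0%nat) (cmul (M 1%nat 1%nat) (M 2%nat 2%nat)))
               (cmul (M 0%nat 1%nat) (cmul (M 1%nat 2%nat) (M 2%nat 0%nat))))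
         (cmul (M 0%nat 2%nat) (cmul (M 1%nat 0%nat) (M 2%nat 1%nat))))
   (cadd (cadd (cmul (M 0%nat 2%nat) (cmul (M 1%nat 1%nat) (M 2%nat 0%nat)))
               (cmul (M 0%nat 0%nat) (cmul (M 1%nat 2%nat) (M 2%nat 1%nat))))
         (cmul (M 0%nat 1%nat) (cmul (M 1%nat 0%nat) (M 2%nat 2%nat)))).

Definition charpoly (J : Mat3) (z : Cx) : Cx :=
  cdet3 (fun i j => csub (if Nat.eqb i j then z else czero) (Cof (J i j))).

Definition is_eigenvalue (J : Mat3) (z : Cx) : Prop := charpoly J z = czero.

Definition delta (beta gamma mu : R) : R := beta / (gamma + mu).

Definition F (p d : R) : R :=
  d ^ 2 / (2 * (1 - 2 * p)) *
  ((1 + sqrt (1 - 4 * (1 - p) / d)) ^ 3 /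
   ((d - 2) + d * sqrt (1 - 4 * (1 - p) / d))) - 1.

Definition A1 (beta gamma mu p : R) : R :=
  let d := delta beta gamma mu in
  / 2 * / (1 + gamma / mu) * (1 - 2 / d + sqrt (1 - 4 * (1 - p) / d)).
Definition S0_1 (beta gamma mu p : R) : R :=
  let d := delta beta gamma mu in
  1 / (d * (gamma / mu + 1) * A1 beta gamma mu p + 1).
Definition S1_1 (beta gamma mu p : R) : R :=
  let d := delta beta gamma mu in
  let A := A1 beta gamma mu p in
  (1 - p) * d * (gamma / mu + 1) * A / (d * (gamma / mu + 1) * A + 1) ^ 2.
Definition R_1 (beta gamma mu p : R) : R := gamma / mu * A1 beta gamma mu p.

(* Jacobian of the (S0, S1, A) subsystem
     S0' = mu - beta S0 A - mu S0
     S1' = (1-p) beta S0 A - beta S1 A - mu S1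
     A'  = beta (p S0 + S1) A - (gamma + mu) A
   at the point (S0, S1, A). *)
Definition jac (beta gamma mu p S0 S1 A : R) : Mat3 := fun i j =>
  match i, j with
  | 0%nat, 0%nat => - beta * A - mu
  | 0%nat, 1%nat => 0
  | 0%nat, 2%nat => - beta * S0
  | 1%nat, 0%nat => (1 - p) * beta * A
  | 1%nat, 1%nat => - beta * A - mu
  | 1%nat, 2%nat => (1 - p) * beta * S0 - beta * S1
  | 2%nat, 0%nat => beta * p * A
  | 2%nat, 1%nat => beta * A
  | 2%nat, 2%nat => beta * (p * S0 + S1) - (gamma + mu)
  | _, _ => 0
  end.

Definition jac_E1 (beta gamma mu p : R) : Mat3 :=
  jac beta gamma mu p (S0_1 beta gamma mu p) (S1_1 beta gamma mu p)
      (A1 beta gamma mu p).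

(* At E1 the Jacobian is rational in x = δ(γ/μ+1)A1, which satisfies
   (x+1)^2 = δ(x+p).  In that parametrisation its trace is -2μ(x+1) < 0, its
   determinant has the sign of 1-2p-x < 0, and the condition γ/μ > F(δ) says
   that the Routh–Hurwitz inequality fails: det < tr·m2, where m2 is the sum
   of the principal 2x2 minors.  Then the
   characteristic cubic t^3 - tr t^2 + m2 t - det is positive at t = tr, so it
   has a real root λ < tr < 0, and the complementary quadratic
   z^2 - (tr-λ) z + det/λ has positive coefficients, hence roots with positive
   real part. *)

From Pilot Require Import Defs.
From Stdlib Require Import Reals Lra.
Open Scope R_scope.

Definition tr3 (J : Mat3) : R := J 0%nat 0%nat + J 1%nat 1%nat + J 2%nat 2%nat.

Definition pminor3 (J : Mat3) : R :=
  J 0%nat 0%nat * J 1%nat 1%nat - J 0%nat 1%nat * J 1%nat 0%nat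
  + J 0%nat 0%nat * J 2%nat 2%nat - J 0%nat 2%nat * J 2%nat 0%nat
  + J 1%nat 1%nat * J 2%nat 2%nat - J 1%nat 2%nat * J 2%nat 1%nat.

Definition det3 (J : Mat3) : R :=
  J 0%nat 0%nat * (J 1%nat 1%nat * J 2%nat 2%nat - J 1%nat 2%nat * J 2%nat 1%nat)
  - J 0%nat 1%nat * (J 1%nat 0%nat * J 2%nat 2%nat - J 1%nat 2%nat * J 2%nat 0%nat)
  + J 0%nat 2%nat * (J 1%nat 0%nat * J 2%nat 1%nat - J 1%nat 1%nat * J 2%nat 0%nat).

Definition cquad (s q : R) (z : Cx) : Cx :=
  cadd (csub (cmul z z) (cmul (Cof s) z)) (Cof q).

Lemma charpoly_expand (J : Mat3) (z : Cx) :
  charpoly J z =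
  csub (cadd (csub (cmul z (cmul z z)) (cmul (Cof (tr3 J)) (cmul z z)))
             (cmul (Cof (pminor3 J)) z))
       (Cof (det3 J)).
Proof.
  destruct z as [a b].
  unfold tr3, pminor3, det3, charpoly, cdet3, csub, cadd, cneg, cmul, Cof, czero; simpl.
  f_equal; ring.
Qed.

Lemma charpoly_factor (J : Mat3) (lam : R) :
  lam ^ 3 - tr3 J * lam ^ 2 + pminor3 J * lam - det3 J = 0 ->
  forall z : Cx,
    charpoly J z =
    cmul (csub z (Cof lam))
         (cquad (tr3 J - lam) (pminor3 J - lam * (tr3 J - lam)) z).
Proof.
  intros Hroot [a b].
  rewrite charpoly_expand.
  replace (det3 J) with (lam ^ 3 - tr3 J * lam ^ 2 + pminor3 J * lam) by lra.
  unfold cquad, csub, cadd, cneg, cmul, Cof; simpl.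
  f_equal; ring.
Qed.

(* The cubic is positive at [a] and tends to -oo, so IVT gives a root below [a]. *)
Lemma cubic_root_lt (a b c : R) :
  c < a * b -> exists lam, lam < a /\ lam ^ 3 - a * lam ^ 2 + b * lam - c = 0.
Proof.
  intros Habc.
  set (f := fun t => t ^ 3 - a * t ^ 2 + b * t - c).
  set (M := 1 + Rabs a + Rabs b + Rabs c).
  assert (Ha : - a <= Rabs a) by (rewrite <- Rabs_Ropp; apply Rle_abs).
  assert (Hb : - b <= Rabs b) by (rewrite <- Rabs_Ropp; apply Rle_abs).
  assert (Hc : - c <= Rabs c) by (rewrite <- Rabs_Ropp; apply Rle_abs).
  pose proof (Rabs_pos a); pose proof (Rabs_pos b); pose proof (Rabs_pos c).
  assert (HM : 1 <= M) by (unfold M; lra).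
  assert (Hlt : - M < a) by (unfold M; lra).
  assert (Hlow : f (- M) < 0).
  { unfold f.
    replace ((- M) ^ 3 - a * (- M) ^ 2 + b * (- M) - c)
      with (- (M * (M * M)) - a * (M * M) - b * M - c) by ring.
    assert (HMcube : M * (M * M) = (1 + Rabs a + Rabs b + Rabs c) * (M * M)) by reflexivity.
    assert (HMM : M <= M * M) by nra.
    assert (- a * (M * M) <= Rabs a * (M * M)) by (apply Rmult_le_compat_r; nra).
    assert (- b * M <= Rabs b * M) by (apply Rmult_le_compat_r; lra).
    assert (Rabs b * M <= Rabs b * (M * M)) by (apply Rmult_le_compat_l; lra).
    assert (Rabs c <= Rabs c * (M * M)) by nra.
    nra. }
  assert (Hhigh : 0 < f a) by (unfold f; nra).
  assert (Hcont : continuity f) by (unfold f; reg).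
  destruct (IVT f (- M) a Hcont Hlt Hlow Hhigh) as [lam [[_ [Hle | ->]] Hf]].
  - now exists lam.
  - lra.
Qed.

Lemma cquad_root_re_pos (s q : R) (z : Cx) :
  0 < s -> 0 < q -> cquad s q z = czero -> 0 < re z.
Proof.
  destruct z as [a b]; intros Hs Hq Hz.
  unfold cquad, cadd, csub, cneg, cmul, Cof, czero in Hz; simpl in *.
  injection Hz as Hre Him.
  assert (Hb : b = 0 \/ 2 * a = s)
    by (destruct (Req_dec b 0); [left | right; nra]; auto).
  destruct Hb as [-> | Hb]; nra.
Qed.

Lemma charpoly_saddle (J : Mat3) :
  tr3 J < 0 -> det3 J < 0 -> det3 J < tr3 J * pminor3 J ->
  exists lam s q : R,
    lam < 0 /\
    (forall z, charpoly J z = cmul (csub z (Cof lam)) (cquad s q z)) /\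
    (forall z, cquad s q z = czero -> 0 < re z).
Proof.
  intros Htr Hdet HRH.
  destruct (cubic_root_lt _ _ _ HRH) as [lam [Hlam Hroot]].
  exists lam, (tr3 J - lam), (pminor3 J - lam * (tr3 J - lam)).
  split; [lra | split].
  - exact (charpoly_factor J lam Hroot).
  - intros z. apply cquad_root_re_pos; [lra |].
    assert (Hq : lam * (pminor3 J - lam * (tr3 J - lam)) = det3 J) by nra.
    nra.
Qed.

Section JacobianAtParameter.

Variables beta gamma mu p x : R.
Hypotheses (Hbeta : 0 < beta) (Hmu : 0 < mu) (Hx : 0 < x).
Hypothesis Hbalance : gamma + mu = beta * (x + p) / (x + 1) ^ 2.

Let J : Mat3 :=
  jac beta gamma mu p (1 / (x + 1)) ((1 - p) * x / (x + 1) ^ 2) (mu * x / beta).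

Lemma jac_param_22 : J 2%nat 2%nat = 0.
Proof. unfold J, jac; rewrite Hbalance; field; lra. Qed.

Lemma tr3_jac_param : tr3 J = - 2 * mu * (x + 1).
Proof.
  unfold tr3; rewrite jac_param_22; unfold J, jac; field; lra.
Qed.

Lemma det3_jac_param : det3 J = - beta * mu ^ 2 * x * (x + 2 * p - 1) / (x + 1).
Proof.
  unfold det3; rewrite jac_param_22; unfold J, jac; field; lra.
Qed.

Lemma det3_sub_tr3_pminor3_jac_param :
  det3 J - tr3 J * pminor3 J = mu ^ 2 * (2 * mu * (x + 1) ^ 3 - beta * (1 - 2 * p) * x).
Proof.
  rewrite tr3_jac_param, det3_jac_param.
  unfold pminor3; rewrite jac_param_22; unfold J, jac; field; lra.
Qed.

Lemma jac_param_saddle :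
  1 - 2 * p < x -> 2 * mu * (x + 1) ^ 3 < beta * (1 - 2 * p) * x ->
  exists lam s q : R,
    lam < 0 /\
    (forall z, charpoly J z = cmul (csub z (Cof lam)) (cquad s q z)) /\
    (forall z, cquad s q z = czero -> 0 < re z).
Proof.
  intros Hx12 HRH.
  apply charpoly_saddle.
  - rewrite tr3_jac_param; nra.
  - rewrite det3_jac_param.
    assert (0 < beta * mu ^ 2 * x * (x + 2 * p - 1) / (x + 1)); [| unfold Rdiv in *; lra].
    apply Rdiv_lt_0_compat; [| lra].
    repeat apply Rmult_lt_0_compat; try lra; apply pow_lt; lra.
  - pose proof det3_sub_tr3_pminor3_jac_param.
    assert (0 < mu ^ 2) by (apply pow_lt; lra).
    nra.
Qed.

End JacobianAtParameter.

(* The paper's quantity δ(γ/μ+1)A at E1; all coordinates of E1 are rational in it. *)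
Definition xE1 (beta gamma mu p : R) : R :=
  let d := delta beta gamma mu in
  (d - 2 + d * sqrt (1 - 4 * (1 - p) / d)) / 2.

Section EquilibriumE1.

Variables beta gamma mu p : R.
Hypotheses (Hbeta : 0 < beta) (Hgamma : 0 < gamma) (Hmu : 0 < mu).
Hypothesis Hp : p < 1 / 2.
Hypothesis Hdelta : delta beta gamma mu > 4 * (1 - p).

Let d := delta beta gamma mu.
Let w := 1 - 4 * (1 - p) / d.
Let x := xE1 beta gamma mu p.

Lemma delta_pos : 0 < d.
Proof. unfold d, delta; apply Rdiv_lt_0_compat; lra. Qed.

Lemma sqrt_disc_sq : sqrt w * sqrt w = w.
Proof.
  pose proof delta_pos.
  apply sqrt_sqrt.
  replace w with ((d - 4 * (1 - p)) / d) by (unfold w; field; lra).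
  fold d in Hdelta; apply Rlt_le, Rdiv_lt_0_compat; lra.
Qed.

Lemma xE1_sqrt : x = (d - 2 + d * sqrt w) / 2.
Proof. reflexivity. Qed.

Lemma xE1_gt : 1 - 2 * p < x.
Proof.
  pose proof (sqrt_pos w); pose proof delta_pos.
  rewrite xE1_sqrt; fold d in Hdelta; nra.
Qed.

Lemma xE1_pos : 0 < x.
Proof. pose proof xE1_gt; lra. Qed.

Lemma xE1_quadratic : (x + 1) ^ 2 = d * (x + p).
Proof.
  pose proof sqrt_disc_sq; pose proof delta_pos.
  assert (Hdw : d * w = d - 4 * (1 - p)) by (unfold w; field; lra).
  rewrite xE1_sqrt; nra.
Qed.

Lemma delta_scale : d * (gamma / mu + 1) = beta / mu.
Proof. unfold d, delta; field; lra. Qed.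

Lemma A1_xE1 : Defs.A1 beta gamma mu p = mu * x / beta.
Proof.
  pose proof delta_pos.
  unfold Defs.A1; fold d; fold w.
  replace (1 - 2 / d + sqrt w) with (2 * x / d) by (rewrite xE1_sqrt; field; lra).
  replace (1 + gamma / mu) with (d * (gamma / mu + 1) / d) by (field; lra).
  rewrite delta_scale; field; lra.
Qed.

Lemma scaled_A1 : d * (gamma / mu + 1) * Defs.A1 beta gamma mu p = x.
Proof. rewrite delta_scale, A1_xE1; field; lra. Qed.

Lemma S0_1_xE1 : S0_1 beta gamma mu p = 1 / (x + 1).
Proof. unfold S0_1; fold d; now rewrite scaled_A1. Qed.

Lemma S1_1_xE1 : S1_1 beta gamma mu p = (1 - p) * x / (x + 1) ^ 2.
Proof.
  unfold S1_1; fold d.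
  replace ((1 - p) * d * (gamma / mu + 1) * Defs.A1 beta gamma mu p)
    with ((1 - p) * (d * (gamma / mu + 1) * Defs.A1 beta gamma mu p)) by ring.
  now rewrite scaled_A1.
Qed.

Lemma jac_E1_xE1 :
  jac_E1 beta gamma mu p =
  jac beta gamma mu p (1 / (x + 1)) ((1 - p) * x / (x + 1) ^ 2) (mu * x / beta).
Proof. unfold jac_E1; now rewrite S0_1_xE1, S1_1_xE1, A1_xE1. Qed.

Lemma balance_xE1 : gamma + mu = beta * (x + p) / (x + 1) ^ 2.
Proof.
  pose proof xE1_gt.
  rewrite xE1_quadratic; unfold d, delta; field; lra.
Qed.

Lemma F_xE1 : F p d = 2 * (x + 1) ^ 3 / (d * (1 - 2 * p) * x) - 1.
Proof.
  pose proof delta_pos; pose proof xE1_pos.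
  unfold F; fold w.
  replace (1 + sqrt w) with (2 * (x + 1) / d) by (rewrite xE1_sqrt; field; lra).
  replace (d - 2 + d * sqrt w) with (2 * x) by (rewrite xE1_sqrt; field).
  field; repeat split; lra.
Qed.

Lemma F_threshold_xE1 :
  gamma / mu > F p d -> 2 * mu * (x + 1) ^ 3 < beta * (1 - 2 * p) * x.
Proof.
  intros HF.
  pose proof delta_pos; pose proof xE1_pos.
  assert (Hpos : 0 < d * (1 - 2 * p) * x) by (apply Rmult_lt_0_compat; nra).
  rewrite F_xE1 in HF.
  assert (H1 : 2 * (x + 1) ^ 3 < d * (1 - 2 * p) * x * (gamma / mu + 1)).
  { apply (Rmult_lt_reg_r (/ (d * (1 - 2 * p) * x))); [now apply Rinv_0_lt_compat |].
    replace (d * (1 - 2 * p) * x * (gamma / mu + 1) * / (d * (1 - 2 * p) * x))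
      with (gamma / mu + 1) by (field; lra).
    unfold Rdiv in HF; lra. }
  replace (d * (1 - 2 * p) * x * (gamma / mu + 1))
    with (d * (gamma / mu + 1) * (1 - 2 * p) * x) in H1 by ring.
  rewrite delta_scale in H1.
  apply (Rmult_lt_compat_l mu) in H1; [| lra].
  replace (mu * (beta / mu * (1 - 2 * p) * x)) with (beta * (1 - 2 * p) * x) in H1
    by (field; lra).
  lra.
Qed.

End EquilibriumE1.

Theorem mainTheorem9 (beta gamma mu p : R) :
  0 < beta -> 0 < gamma -> 0 < mu -> 0 < p < 1 / 2 ->
  delta beta gamma mu > 4 * (1 - p) ->
  gamma / mu > F p (delta beta gamma mu) ->
  exists lam s q : R,
    lam < 0 /\
    (forall z : Cx,
       charpoly (jac_E1 beta gamma mu p) z =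
       cmul (csub z (Cof lam))
            (cadd (csub (cmul z z) (cmul (Cof s) z)) (Cof q))) /\
    (forall z : Cx,
       cadd (csub (cmul z z) (cmul (Cof s) z)) (Cof q) = czero -> 0 < re z).
Proof.
  intros Hbeta Hgamma Hmu [_ Hp] Hdelta HF.
  pose proof (xE1_pos beta gamma mu p Hbeta Hgamma Hmu Hp Hdelta).
  pose proof (xE1_gt beta gamma mu p Hbeta Hgamma Hmu Hdelta).
  pose proof (balance_xE1 beta gamma mu p Hbeta Hgamma Hmu Hp Hdelta).
  pose proof (F_threshold_xE1 beta gamma mu p Hbeta Hgamma Hmu Hp Hdelta HF).
  rewrite (jac_E1_xE1 beta gamma mu p Hbeta Hgamma Hmu).
  apply jac_param_saddle; assumption.
Qed.
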